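(* For $t\in(0,1)$ and $n\ge1$, $$(t-\alpha_n)(r_{n+1}-r_n)=\beta_{n+1}R_{n+1}-\beta_nR_{n-1},$$ $$(1-\alpha_n)(y_n-y_{n+1})=\beta_nx_{n-1}-\beta_{n+1}x_{n+1},$$ $$-\alpha_n(y_{n+1}-y_n+r_n-r_{n+1}-1)=\beta_{n+1}x_{n+1}-\beta_nx_{n-1}+\beta_nR_{n-1}-\beta_{n+1}R_{n+1}.$$
   Context: Fix $\alpha>0$, $\beta>0$, and real $A,B$ with $A\ge0$, $A+B\ge0$, not both zero; $\theta$ is the Heaviside step function. For $t\in(0,1)$ let $w(x;t)=x^\alpha(1-x)^\beta(A+B\theta(x-t))$ on $[0,1]$, and let $P_n(x)=P_n(x;t)=x^n+\mathsf p_1(n,t)x^{n-1}+\cdots$ be the monic orthogonal polynomials: $\int_0^1P_iP_jw\,dx=h_i(t)\delta_{ij}$, $h_i>0$, satisfying $xP_n=P_{n+1}+\alpha_nP_n+\beta_nP_{n-1}$, $P_{-1}=0$, $\beta_n=h_n/h_{n-1}$, $\mathsf p_1(0,t)=0$. Define $R_n(t)=B\,t^\alpha(1-t)^\beta P_n(t;t)^2/h_n$, $r_n(t)=B\,t^\alpha(1-t)^\beta P_n(t;t)P_{n-1}(t;t)/h_{n-1}$ ($r_0=0$), $x_n(t)=\frac{\beta}{h_n}\int_0^1\frac{P_n(y)^2}{1-y}\,y^\alpha(1-y)^\beta(A+B\theta(y-t))\,dy$, $y_n(t)=\frac{\beta}{h_{n-1}}\int_0^1\frac{P_n(y)P_{n-1}(y)}{1-y}\,y^\alpha(1-y)^\beta(A+B\theta(y-t))\,dy$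 ($y_0=0$). *)

From Stdlib Require Import Reals.
Open Scope R_scope.

(* x^a for real a, with the convention 0 for x <= 0 (only x in [0,1] matters). *)
Definition rpow (x a : R) : R := if Rlt_dec 0 x then Rpower x a else 0.

(* Heaviside step function, theta(0) = 1 (value on a null set is irrelevant). *)
Definition theta (z : R) : R := if Rle_dec 0 z then 1 else 0.

Definition weight (alpha beta A B t x : R) : R :=
  rpow x alpha * rpow (1 - x) beta * (A + B * theta (x - t)).

Definition Pe (c : nat -> nat -> R) (n : nat) (x : R) : R :=
  sum_f_R0 (fun k => c n k * x ^ k) n.

(* P_{n-1} with the convention P_{-1} = 0. *)
Definition Pprev (c : nat -> nat -> R) (n : nat) (x : R) : R :=
  match n with O => 0 | S m => Pe c m x end.

(* For integrands that are Riemann integrable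
   on [0,1] this coincides with the Riemann integral. *)
Definition improper_int01 (f : R -> R) (v : R) : Prop :=
  exists pr : (forall b : R, 0 <= b < 1 -> Riemann_integrable f 0 b),
    forall eps : R, 0 < eps ->
      exists d : R, 0 < d /\
        forall (b : R) (Hb : 0 <= b < 1), 1 - d < b ->
          Rabs (RiemannInt (pr b Hb) - v) < eps.

Definition Rn (c : nat -> nat -> R) (h : nat -> R) (alpha beta B t : R) (n : nat) : R :=
  B * rpow t alpha * rpow (1 - t) beta * (Pe c n t) ^ 2 / h n.

Definition rn (c : nat -> nat -> R) (h : nat -> R) (alpha beta B t : R) (n : nat) : R :=
  match n with
  | O => 0
  | S m => B * rpow t alpha * rpow (1 - t) beta * Pe c n t * Pe c m t / h m
  end.

(* x_n = beta/h_n * X_n, where X_n = int_0^1 P_n(y)^2/(1-y) w(y) dy *)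
Definition xn (beta : R) (h X : nat -> R) (n : nat) : R := beta / h n * X n.

(* y_n = beta/h_{n-1} * Y_n, where Y_n = int_0^1 P_n P_{n-1}/(1-y) w(y) dy; y_0 = 0 *)
Definition yn (beta : R) (h Y : nat -> R) (n : nat) : R :=
  match n with O => 0 | S m => beta / h m * Y n end.

(* The first identity is the three-term recurrence evaluated at [t].  For the others,
   integrate the derivative of [y P(y) y^alpha (1-y)^beta] against [A + B theta(y - t)]:
   the boundary terms vanish at [0] and [1], so only the jump at [t] survives.  With
   [P = P_n P_(n-1)] and orthogonality this gives [y_n = t r_n - p_1(n)], which together
   with [alpha_n = p_1(n) - p_1(n+1)] yields [y_(n+1) - y_n - t (r_(n+1) - r_n) = alpha_n].
   Dividing [(1 - alpha_n) P_n = (1 - y) P_n + P_(n+1) + beta_n P_(n-1)] by [1 - y] and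
   integrating against [P_(n-1)] and [P_(n+1)] gives the second identity; the third is a
   linear combination of the first two and the relation for [alpha_n]. *)

From Stdlib Require Import Reals Lra Lia.
Open Scope R_scope.

Lemma improper_int01_ext (f g : R -> R) (v : R) :
  (forall x, 0 <= x < 1 -> f x = g x) ->
  improper_int01 f v -> improper_int01 g v.
Proof.
  intros Hfg [prf Hf].
  assert (prg : forall b, 0 <= b < 1 -> Riemann_integrable g 0 b).
  { intros b Hb. refine (@Riemann_integrable_ext f g 0 b _ (prf b Hb)).
    intros x Hx. rewrite Rmin_left in Hx by lra. rewrite Rmax_right in Hx by lra.
    apply Hfg; lra. }
  exists prg. intros eps Heps. destruct (Hf eps Heps) as [d [Hd H]].
  exists d; split; [exact Hd|]. intros b Hb Hbd.
  rewrite <- (RiemannInt_P18 (prf b Hb) (prg b Hb)); [apply H; exact Hbd|lra|].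
  intros x Hx; apply Hfg; lra.
Qed.

Lemma improper_int01_unique (f : R -> R) (v w : R) :
  improper_int01 f v -> improper_int01 f w -> v = w.
Proof.
  intros [prf Hf] [prg Hg].
  destruct (Req_dec v w) as [|Hne]; [assumption|exfalso].
  set (e := Rabs (v - w) / 2).
  assert (He : 0 < e) by (apply Rdiv_lt_0_compat; [apply Rabs_pos_lt; lra|lra]).
  destruct (Hf e He) as [d1 [Hd1 H1]]. destruct (Hg e He) as [d2 [Hd2 H2]].
  set (m := Rmin d1 d2).
  assert (Hm : 0 < m) by (apply Rmin_pos; assumption).
  set (b := Rmax 0 (1 - m / 2)).
  assert (Hb : 0 <= b < 1) by (split; [apply Rmax_l|apply Rmax_lub_lt; lra]).
  assert (Hbm : 1 - m / 2 <= b) by apply Rmax_r.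
  assert (m <= d1) by apply Rmin_l; assert (m <= d2) by apply Rmin_r.
  specialize (H1 b Hb ltac:(lra)); specialize (H2 b Hb ltac:(lra)).
  rewrite (RiemannInt_P5 (prg b Hb) (prf b Hb)) in H2.
  assert (Rabs (v - w) <= Rabs (RiemannInt (prf b Hb) - w) + Rabs (RiemannInt (prf b Hb) - v)).
  { replace (v - w) with ((RiemannInt (prf b Hb) - w) - (RiemannInt (prf b Hb) - v)) by ring.
    eapply Rle_trans; [apply Rabs_triang|]. rewrite Rabs_Ropp. lra. }
  unfold e in *. lra.
Qed.

Lemma improper_int01_plus_scal (f g : R -> R) (v w l : R) :
  improper_int01 f v -> improper_int01 g w ->
  improper_int01 (fun x => f x + l * g x) (v + l * w).
Proof.
  intros [prf Hf] [prg Hg].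
  exists (fun b Hb => RiemannInt_P10 l (prf b Hb) (prg b Hb)).
  intros eps Heps.
  set (L := Rabs l + 1).
  assert (HL : 0 < L) by (pose proof (Rabs_pos l); unfold L; lra).
  destruct (Hf (eps / 2)) as [d1 [Hd1 H1]]; [lra|].
  destruct (Hg (eps / (2 * L))) as [d2 [Hd2 H2]]; [apply Rdiv_lt_0_compat; lra|].
  exists (Rmin d1 d2); split; [apply Rmin_pos; assumption|].
  intros b Hb Hbd.
  pose proof (Rmin_l d1 d2); pose proof (Rmin_r d1 d2).
  specialize (H1 b Hb ltac:(lra)); specialize (H2 b Hb ltac:(lra)).
  rewrite (RiemannInt_P13 (prf b Hb) (prg b Hb)).
  replace (RiemannInt (prf b Hb) + l * RiemannInt (prg b Hb) - (v + l * w))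
    with ((RiemannInt (prf b Hb) - v) + l * (RiemannInt (prg b Hb) - w)) by ring.
  eapply Rle_lt_trans; [apply Rabs_triang|].
  rewrite Rabs_mult.
  assert (Rabs l * Rabs (RiemannInt (prg b Hb) - w) <= L * (eps / (2 * L))).
  { apply Rmult_le_compat; [apply Rabs_pos|apply Rabs_pos|unfold L; lra|lra]. }
  replace (L * (eps / (2 * L))) with (eps / 2) in * by (field; lra).
  lra.
Qed.

Lemma improper_int01_scal (f : R -> R) (v l : R) :
  improper_int01 f v -> improper_int01 (fun x => l * f x) (l * v).
Proof.
  intros H. replace (l * v) with (v + (l - 1) * v) by ring.
  apply (improper_int01_ext (fun x => f x + (l - 1) * f x)); [intros; ring|].
  apply improper_int01_plus_scal; assumption.
Qed.

Definition poly (a : nat -> R) (d : nat) (x : R) : R := sum_f_R0 (fun k => a k * x ^ k) d.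

Lemma poly_plus_scal a b l d x :
  poly (fun k => a k + l * b k) d x = poly a d x + l * poly b d x.
Proof. unfold poly; induction d as [|d IH]; simpl; [|rewrite IH]; ring. Qed.

Lemma poly_S a d x : poly a (S d) x = poly a d x + a (S d) * x ^ S d.
Proof. reflexivity. Qed.

Definition shift_coef (a : nat -> R) (k : nat) : R :=
  match k with O => 0 | S j => a j end.

Lemma Rmult_x_poly a d x : x * poly a d x = poly (shift_coef a) (S d) x.
Proof.
  induction d as [|d IH].
  - unfold poly; simpl. ring.
  - rewrite (poly_S a d x), Rmult_plus_distr_l, IH, (poly_S _ (S d) x). simpl. ring.
Qed.

Definition dpoly (a : nat -> R) (d : nat) (x : R) : R :=
  sum_f_R0 (fun k => a k * (INR k * x ^ pred k)) d.

Lemma derivable_pt_lim_poly a d x : derivable_pt_lim (poly a d) x (dpoly a d x).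
Proof.
  induction d as [|d IH].
  - unfold poly, dpoly; simpl.
    replace (a 0%nat * (0 * 1)) with 0 by ring.
    apply (derivable_pt_lim_const (a 0%nat * 1)).
  - unfold dpoly; simpl sum_f_R0. fold (dpoly a d x).
    apply (derivable_pt_lim_plus (poly a d) (fun y => a (S d) * y ^ S d)); [exact IH|].
    apply (derivable_pt_lim_scal (fun y => y ^ S d)), derivable_pt_lim_pow.
Qed.

Lemma continuity_pt_poly a d x : continuity_pt (poly a d) x.
Proof. apply derivable_continuous_pt. exists (dpoly a d x). apply derivable_pt_lim_poly. Qed.

Lemma continuity_pt_dpoly a d x : continuity_pt (dpoly a d) x.
Proof.
  unfold dpoly; induction d as [|d IH]; simpl sum_f_R0.
  - apply derivable_continuous_pt. reg.
  - apply (continuity_pt_plus (fun y => sum_f_R0 (fun k => a k * (INR k * y ^ pred k)) d)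
             (fun y => a (S d) * (INR (S d) * y ^ pred (S d)))); [exact IH|].
    apply derivable_continuous_pt. reg.
Qed.

Lemma Rmult_x_dpoly a d x : x * dpoly a d x = poly (fun k => INR k * a k) d x.
Proof.
  unfold dpoly, poly; induction d as [|d IH]; simpl sum_f_R0.
  - simpl. ring.
  - rewrite Rmult_plus_distr_l, IH. simpl. ring.
Qed.

Lemma Rmult_x_dpoly_monic a d x : a (S d) = 1 ->
  x * dpoly a (S d) x
  = INR (S d) * poly a (S d) x + poly (fun k => (INR k - INR (S d)) * a k) d x.
Proof.
  intros Ha.
  transitivity (INR (S d) * poly a (S d) x
                + poly (fun k => INR k * a k + (- INR (S d)) * a k) d x).
  - rewrite Rmult_x_dpoly, poly_plus_scal, !poly_S, Ha. ring.
  - f_equal. unfold poly. apply sum_eq. intros. ring.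
Qed.

Section Orthogonality.

Variables (c : nat -> nat -> R) (h an bn : nat -> R) (W : R -> R).
Hypothesis monic : forall m, c m m = 1.
Hypothesis orth : forall i j,
  improper_int01 (fun x => Pe c i x * Pe c j x * W x) (if Nat.eqb i j then h i else 0).
Hypothesis h_pos : forall i, 0 < h i.
Hypothesis recurrence : forall m x,
  x * Pe c m x = Pe c (S m) x + an m * Pe c m x + bn m * Pprev c m x.
Hypothesis bn_S : forall m, bn (S m) = h (S m) / h m.

Let recurrence_S m x :
  x * Pe c (S m) x = Pe c (S (S m)) x + an (S m) * Pe c (S m) x + bn (S m) * Pe c m x :=
  recurrence (S m) x.

Lemma orth_neq i j : i <> j -> improper_int01 (fun x => Pe c i x * Pe c j x * W x) 0.
Proof. intros Hij. generalize (orth i j). apply Nat.eqb_neq in Hij. now rewrite Hij. Qed.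

Lemma orth_diag i : improper_int01 (fun x => Pe c i x * Pe c i x * W x) (h i).
Proof. generalize (orth i i). now rewrite Nat.eqb_refl. Qed.

(* Induction on the degree, peeling off the leading term with the monic [P_d]. *)
Lemma orth_poly_le d a m : (d <= m)%nat ->
  improper_int01 (fun x => poly a d x * Pe c m x * W x)
                 (if Nat.eqb d m then a d * h m else 0).
Proof.
  revert a. induction d as [|d IH]; intros a Hdm.
  - replace (if Nat.eqb 0 m then a 0%nat * h m else 0)
      with (a 0%nat * (if Nat.eqb 0 m then h 0%nat else 0)) by (destruct m; simpl; ring).
    eapply improper_int01_ext; [|exact (improper_int01_scal _ _ (a 0%nat) (orth 0%nat m))].
    intros x _. unfold poly, Pe. simpl. rewrite monic. ring.
  - set (e := fun k => a k + (- a (S d)) * c (S d) k).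
    assert (H := improper_int01_plus_scal _ _ _ _ (a (S d)) (IH e ltac:(lia)) (orth (S d) m)).
    replace (if Nat.eqb (S d) m then a (S d) * h m else 0)
      with ((if Nat.eqb d m then e d * h m else 0)
            + a (S d) * (if Nat.eqb (S d) m then h (S d) else 0)).
    + eapply improper_int01_ext; [|exact H]. intros x _.
      unfold e. rewrite poly_plus_scal, poly_S. unfold Pe. simpl sum_f_R0.
      fold (poly (c (S d)) d x). rewrite monic. simpl. ring.
    + replace (Nat.eqb d m) with false by (symmetry; apply Nat.eqb_neq; lia).
      destruct (Nat.eqb_spec (S d) m); [subst|]; ring.
Qed.

(* Integrate [(x P_N - P_(N+1)) P_N w], a polynomial of degree [N] with leading
   coefficient [p_1(N) - p_1(N+1)] (the subleading coefficients), in two ways. *)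
Lemma an_S_eq_coef_diff n : an (S n) = c (S n) n - c (S (S n)) (S n).
Proof.
  set (N := S n).
  set (e := fun k => shift_coef (c N) k + (-1) * c (S N) k).
  assert (I1 := orth_poly_le N e N (le_n N)). rewrite Nat.eqb_refl in I1.
  assert (I2 := improper_int01_plus_scal _ _ _ _ (bn N)
                  (improper_int01_scal _ _ (an N) (orth_diag N)) (orth_neq n N ltac:(lia))).
  assert (Hpoly : forall x, poly e N x = x * Pe c N x - Pe c (S N) x).
  { intros x. transitivity (poly e (S N) x).
    - rewrite poly_S. replace (e (S N)) with 0 by (unfold e; simpl; rewrite !monic; ring). ring.
    - unfold e. rewrite poly_plus_scal.
      change (Pe c N x) with (poly (c N) N x); change (Pe c (S N) x) with (poly (c (S N)) (S N) x).
      rewrite Rmult_x_poly. ring. }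
  assert (I3 : improper_int01 (fun x => poly e N x * Pe c N x * W x) (an N * h N + bn N * 0)).
  { eapply improper_int01_ext; [|exact I2]. intros x _.
    assert (Hr := recurrence_S n x). fold N in Hr. rewrite Hpoly, Hr. ring. }
  assert (U := improper_int01_unique _ _ _ I1 I3).
  unfold e in U. simpl in U. specialize (h_pos N).
  apply (Rmult_eq_reg_r (h N)); [|lra]. fold N. lra.
Qed.

(* Evaluate the recurrence at [t]: [(t - alpha_N) P_N(t) = P_(N+1)(t) + beta_N P_(N-1)(t)]. *)
Lemma rn_recurrence alpha beta B t n :
  (t - an (S n)) * (rn c h alpha beta B t (S (S n)) - rn c h alpha beta B t (S n))
  = bn (S (S n)) * Rn c h alpha beta B t (S (S n)) - bn (S n) * Rn c h alpha beta B t n.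
Proof.
  unfold rn, Rn.
  assert (Hr := recurrence_S n t).
  pose proof (h_pos n); pose proof (h_pos (S n)); pose proof (h_pos (S (S n))).
  replace (Pe c (S (S n)) t) with (t * Pe c (S n) t - an (S n) * Pe c (S n) t - bn (S n) * Pe c n t)
    by lra.
  rewrite !bn_S. field. repeat split; lra.
Qed.

(* Divide [(1 - alpha_N) P_N = (1 - y) P_N + P_(N+1) + beta_N P_(N-1)] by [1 - y] and
   integrate against [P_(N-1) w / h_(N-1)] and [P_(N+1) w / h_N]. *)
Lemma xn_yn_recurrence beta X Y n :
  (forall m, improper_int01 (fun y => Pe c m y ^ 2 / (1 - y) * W y) (X m)) ->
  improper_int01 (fun y => Pe c (S n) y * Pe c n y / (1 - y) * W y) (Y (S n)) ->
  improper_int01 (fun y => Pe c (S (S n)) y * Pe c (S n) y / (1 - y) * W y) (Y (S (S n))) ->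
  (1 - an (S n)) * (yn beta h Y (S n) - yn beta h Y (S (S n)))
  = bn (S n) * xn beta h X n - bn (S (S n)) * xn beta h X (S (S n)).
Proof.
  intros HX HY1 HY2.
  pose proof (h_pos n); pose proof (h_pos (S n)); pose proof (h_pos (S (S n))).
  set (a := an (S n)).
  assert (L := improper_int01_plus_scal _ _ _ _ (- (1 - a) / h (S n))
                 (improper_int01_scal _ _ ((1 - a) / h n) HY1) HY2).
  assert (R1 := improper_int01_plus_scal _ _ _ _ (-1 / h (S n))
                  (improper_int01_scal _ _ (bn (S n) / h n) (HX n)) (HX (S (S n)))).
  assert (R2 := improper_int01_plus_scal _ _ _ _ (1 / h n) R1 (orth_neq (S n) n ltac:(lia))).
  assert (R3 := improper_int01_plus_scal _ _ _ _ (-1 / h (S n)) R2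
                  (orth_neq (S n) (S (S n)) ltac:(lia))).
  assert (R4 : improper_int01
     (fun y => (1 - a) / h n * (Pe c (S n) y * Pe c n y / (1 - y) * W y) +
               - (1 - a) / h (S n) * (Pe c (S (S n)) y * Pe c (S n) y / (1 - y) * W y))
     (bn (S n) / h n * X n + -1 / h (S n) * X (S (S n)) + 1 / h n * 0 + -1 / h (S n) * 0)).
  { eapply improper_int01_ext; [|exact R3]. intros x Hx. cbv beta.
    assert (Hr := recurrence_S n x). fold a in Hr.
    replace (Pe c (S (S n)) x)
      with (x * Pe c (S n) x - a * Pe c (S n) x - bn (S n) * Pe c n x) by lra.
    rewrite bn_S. field. repeat split; lra. }
  assert (U := improper_int01_unique _ _ _ L R4).
  unfold yn, xn. rewrite !bn_S in *.
  replace ((1 - a) * (beta / h n * Y (S n) - beta / h (S n) * Y (S (S n))))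
    with (beta * ((1 - a) / h n * Y (S n) + - (1 - a) / h (S n) * Y (S (S n))))
    by (field; lra).
  rewrite U. field. lra.
Qed.

End Orthogonality.

Lemma RiemannInt_antiderivative (f F : R -> R) a b (pr : Riemann_integrable f a b) :
  a <= b -> (forall x, a <= x <= b -> continuity_pt f x) ->
  (forall x, a <= x <= b -> derivable_pt_lim F x (f x)) ->
  RiemannInt pr = F b - F a.
Proof.
  intros Hab Hc Hd.
  rewrite (RiemannInt_P20 Hab (FTC_P1 Hab Hc) pr).
  assert (HF : antiderivative f F a b).
  { split; [|exact Hab]. intros x Hx. exists (exist _ (f x) (Hd x Hx)). reflexivity. }
  destruct (antiderivative_Ucte _ _ _ _ _ (RiemannInt_P29 Hab Hc) HF) as [C HC].
  rewrite (HC b), (HC a); [ring|lra|lra].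
Qed.

Lemma bounded_on_01 (f : R -> R) : (forall x, continuity_pt f x) ->
  exists M, forall x, 0 <= x <= 1 -> Rabs (f x) <= M.
Proof.
  intros Hc.
  destruct (continuity_ab_maj (fun x => Rabs (f x)) 0 1) as [x0 [HM _]]; [lra| |].
  - intros x _. apply (continuity_pt_comp f Rabs); [apply Hc|apply Rcontinuity_abs].
  - exists (Rabs (f x0)). exact HM.
Qed.

Lemma Rabs_le_between x a : Rabs x <= a -> - a <= x <= a.
Proof.
  intros H. pose proof (Rle_abs x). pose proof (Rle_abs (- x)). rewrite Rabs_Ropp in *. lra.
Qed.

Lemma eq0_of_Rabs_le_linear D C T : 0 < T ->
  (forall eps, 0 < eps < T -> Rabs D <= C * eps) -> D = 0.
Proof.
  intros HT H.
  assert (HC : 0 <= C).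
  { specialize (H (T / 2) ltac:(lra)). pose proof (Rabs_pos D). nra. }
  destruct (Req_dec D 0) as [|Hne]; [assumption|exfalso].
  assert (HD : 0 < Rabs D) by (apply Rabs_pos_lt; exact Hne).
  set (eps := Rmin (T / 2) (Rabs D / (2 * (C + 1)))).
  assert (Heps : 0 < eps) by (apply Rmin_pos; [lra|apply Rdiv_lt_0_compat; lra]).
  assert (eps <= T / 2) by apply Rmin_l.
  assert (Hsmall : eps <= Rabs D / (2 * (C + 1))) by apply Rmin_r.
  assert (2 * (C + 1) * eps <= Rabs D).
  { apply (Rmult_le_compat_l (2 * (C + 1))) in Hsmall; [|lra].
    replace (2 * (C + 1) * (Rabs D / (2 * (C + 1)))) with (Rabs D) in Hsmall by (field; lra).
    exact Hsmall. }
  specialize (H eps ltac:(lra)). nra.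
Qed.

Lemma Rpower_le_1 x a : 0 < x <= 1 -> 0 < a -> 0 < Rpower x a <= 1.
Proof.
  intros Hx Ha. split; [apply exp_pos|].
  replace 1 with (Rpower 1 a) by (unfold Rpower; rewrite ln_1, Rmult_0_r, exp_0; reflexivity).
  apply Rle_Rpower_l; lra.
Qed.

Lemma Rpower_lt_near_0 a eta : 0 < a -> 0 < eta ->
  exists d, 0 < d /\ forall x, 0 < x < d -> Rpower x a < eta.
Proof.
  intros Ha He. exists (Rpower eta (/ a)). split; [apply exp_pos|].
  intros x Hx. replace eta with (Rpower (Rpower eta (/ a)) a) at 1.
  - apply Rlt_Rpower_l; lra.
  - rewrite Rpower_mult, Rinv_l by lra. apply Rpower_1; lra.
Qed.

Lemma Rpower_pred_mult x a : 0 < x -> Rpower x a = Rpower x (a - 1) * x.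
Proof.
  intros Hx. rewrite <- (Rpower_1 x) at 3 by exact Hx. rewrite <- Rpower_plus.
  f_equal; ring.
Qed.

Lemma rpow_pos x a : 0 < x -> rpow x a = Rpower x a.
Proof. intros H. unfold rpow. destruct (Rlt_dec 0 x); [reflexivity|lra]. Qed.

Lemma weight_lt alpha beta A B t x : 0 < x < t -> t < 1 ->
  weight alpha beta A B t x = Rpower x alpha * Rpower (1 - x) beta * A.
Proof.
  intros Hx Ht. unfold weight, theta. rewrite !rpow_pos by lra.
  destruct (Rle_dec 0 (x - t)); [lra|ring].
Qed.

Lemma weight_ge alpha beta A B t x : 0 < t <= x -> x < 1 ->
  weight alpha beta A B t x = Rpower x alpha * Rpower (1 - x) beta * (A + B).
Proof.
  intros Hx Ht. unfold weight, theta. rewrite !rpow_pos by lra.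
  destruct (Rle_dec 0 (x - t)); [ring|lra].
Qed.

Lemma derivable_pt_lim_Rpower_1_minus a y : y < 1 ->
  derivable_pt_lim (fun z => Rpower (1 - z) a) y (- (a * Rpower (1 - y) (a - 1))).
Proof.
  intros Hy. replace (- (a * Rpower (1 - y) (a - 1))) with (a * Rpower (1 - y) (a - 1) * (0 - 1))
    by ring.
  apply (derivable_pt_lim_comp (fun z => 1 - z) (fun z => Rpower z a)).
  - apply (derivable_pt_lim_minus (fct_cte 1) id);
      [apply derivable_pt_lim_const|apply derivable_pt_lim_id].
  - apply derivable_pt_lim_power; lra.
Qed.

Section JumpIntegral.

Variables (alpha beta A B t : R) (Q Qd : R -> R).
Hypotheses (alpha_pos : 0 < alpha) (beta_pos : 0 < beta).
Hypotheses (A_ge0 : 0 <= A) (AB_ge0 : 0 <= A + B) (t_in : 0 < t < 1).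
Hypothesis Q_deriv : forall x, derivable_pt_lim Q x (Qd x).
Hypothesis Qd_cont : forall x, continuity_pt Qd x.

Let Q_cont x : continuity_pt Q x :=
  derivable_continuous_pt Q x (exist _ (Qd x) (Q_deriv x)).

Definition Phi (K y : R) : R := K * (y * Q y * Rpower y alpha * Rpower (1 - y) beta).

Definition phi (K y : R) : R :=
  K * (((1 + alpha + beta) * Q y + y * Qd y - beta * Q y / (1 - y))
       * (Rpower y alpha * Rpower (1 - y) beta)).

(* [(y Q(y) y^alpha (1-y)^beta)' (A + B theta(y - t))], expressed through the weight. *)
Definition jump_integrand (x : R) : R :=
  ((1 + alpha + beta) * Q x + x * Qd x - beta * Q x / (1 - x)) * weight alpha beta A B t x.

Let continuity_pt_powers y : 0 < y < 1 ->
  continuity_pt (fun z => Rpower z alpha * Rpower (1 - z) beta) y.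
Proof.
  intros Hy.
  apply (continuity_pt_mult (fun z => Rpower z alpha) (fun z => Rpower (1 - z) beta));
    apply derivable_continuous_pt.
  - exists (alpha * Rpower y (alpha - 1)). apply derivable_pt_lim_power; lra.
  - exists (- (beta * Rpower (1 - y) (beta - 1))). apply derivable_pt_lim_Rpower_1_minus; lra.
Qed.

Lemma derivable_pt_lim_Phi K y : 0 < y < 1 -> derivable_pt_lim (Phi K) y (phi K y).
Proof.
  intros Hy.
  assert (H1 : derivable_pt_lim (fun z => Rpower z alpha) y (alpha * Rpower y (alpha - 1)))
    by (apply derivable_pt_lim_power; lra).
  assert (H2 := derivable_pt_lim_Rpower_1_minus beta y ltac:(lra)).
  assert (H3 : derivable_pt_lim (fun z => z * Q z) y (1 * Q y + y * Qd y))
    by exact (derivable_pt_lim_mult id Q _ _ _ (derivable_pt_lim_id y) (Q_deriv y)).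
  assert (H := derivable_pt_lim_scal _ K _ _
                 (derivable_pt_lim_mult _ _ _ _ _ (derivable_pt_lim_mult _ _ _ _ _ H3 H1) H2)).
  unfold Phi. replace (phi K y) with
    (K * (((1 * Q y + y * Qd y) * Rpower y alpha + y * Q y * (alpha * Rpower y (alpha - 1)))
          * Rpower (1 - y) beta
          + y * Q y * Rpower y alpha * - (beta * Rpower (1 - y) (beta - 1)))).
  - exact H.
  - unfold phi. rewrite (Rpower_pred_mult y alpha), (Rpower_pred_mult (1 - y) beta) by lra.
    field. lra.
Qed.

Lemma continuity_pt_phi K y : 0 < y < 1 -> continuity_pt (phi K) y.
Proof.
  intros Hy.
  assert (Cid : continuity_pt (fun z => z) y) by (apply derivable_continuous_pt; reg).
  assert (Cc : forall k, continuity_pt (fun _ => k) y)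
    by (intros; apply continuity_pt_const; now intros ? ?).
  assert (Cinner : continuity_pt
            (fun z => (1 + alpha + beta) * Q z + z * Qd z - beta * Q z / (1 - z)) y).
  { apply (continuity_pt_minus (fun z => (1 + alpha + beta) * Q z + z * Qd z)
                               (fun z => beta * Q z / (1 - z))).
    - apply (continuity_pt_plus (fun z => (1 + alpha + beta) * Q z) (fun z => z * Qd z)).
      + apply (continuity_pt_mult (fun _ => 1 + alpha + beta) Q); auto.
      + apply (continuity_pt_mult (fun z => z) Qd); auto.
    - apply (continuity_pt_div (fun z => beta * Q z) (fun z => 1 - z)); [| |lra].
      + apply (continuity_pt_mult (fun _ => beta) Q); auto.
      + apply derivable_continuous_pt; reg. }
  apply (continuity_pt_mult (fun _ => K)); [auto|].
  apply (continuity_pt_mult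
           (fun z => (1 + alpha + beta) * Q z + z * Qd z - beta * Q z / (1 - z))); auto.
Qed.

Lemma RiemannInt_phi K a b (pr : Riemann_integrable (phi K) a b) :
  0 < a <= b -> b < 1 -> RiemannInt pr = Phi K b - Phi K a.
Proof.
  intros Hab Hb. apply RiemannInt_antiderivative; [lra| |]; intros x Hx.
  - apply continuity_pt_phi; lra.
  - apply derivable_pt_lim_Phi; lra.
Qed.

Lemma jump_integrand_lt x : 0 < x < t -> jump_integrand x = phi A x.
Proof. intros Hx. unfold jump_integrand, phi. rewrite weight_lt by lra. ring. Qed.

Lemma jump_integrand_ge x : t <= x < 1 -> jump_integrand x = phi (A + B) x.
Proof. intros Hx. unfold jump_integrand, phi. rewrite weight_ge by lra. ring. Qed.

Lemma Rabs_Phi_le K MQ y : 0 <= K -> 0 < y < 1 -> Rabs (Q y) <= MQ ->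
  Rabs (Phi K y) <= K * (y * MQ * Rpower (1 - y) beta).
Proof.
  intros HK Hy HQ.
  destruct (Rpower_le_1 y alpha) as [P1 P2]; [lra|lra|].
  destruct (Rpower_le_1 (1 - y) beta) as [P3 P4]; [lra|lra|].
  apply Rabs_le_between in HQ.
  assert (- MQ <= Q y * Rpower y alpha <= MQ) by (split; nra).
  assert (0 <= K * y * Rpower (1 - y) beta) by (apply Rmult_le_pos; nra).
  unfold Phi. apply Rabs_le. split; nra.
Qed.

Lemma Rabs_phi_le K MQ MQd y : 0 <= K -> 0 < y < t ->
  Rabs (Q y) <= MQ -> Rabs (Qd y) <= MQd ->
  Rabs (phi K y) <= K * ((1 + alpha + beta) * MQ + MQd + beta * MQ / (1 - t)).
Proof.
  intros HK Hy HQ HQd.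
  destruct (Rpower_le_1 y alpha) as [P1 P2]; [lra|lra|].
  destruct (Rpower_le_1 (1 - y) beta) as [P3 P4]; [lra|lra|].
  apply Rabs_le_between in HQ, HQd.
  assert (Hinv : 0 < / (1 - y) <= / (1 - t)).
  { split; [apply Rinv_0_lt_compat; lra|apply Rinv_le_contravar; lra]. }
  assert (Hi : Rabs ((1 + alpha + beta) * Q y + y * Qd y - beta * Q y / (1 - y))
               <= (1 + alpha + beta) * MQ + MQd + beta * MQ / (1 - t)).
  { assert (- MQd <= y * Qd y <= MQd) by (split; nra).
    assert (- (MQ * / (1 - t)) <= Q y * / (1 - y) <= MQ * / (1 - t)) by (split; nra).
    unfold Rdiv. apply Rabs_le. split; nra. }
  assert (Hp : 0 < Rpower y alpha * Rpower (1 - y) beta <= 1) by (split; nra).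
  unfold phi.
  rewrite Rabs_mult, (Rabs_pos_eq K HK), Rabs_mult, (Rabs_pos_eq _ (Rlt_le _ _ (proj1 Hp))).
  apply Rmult_le_compat_l; [exact HK|].
  pose proof (Rabs_pos ((1 + alpha + beta) * Q y + y * Qd y - beta * Q y / (1 - y))). nra.
Qed.

Lemma RiemannInt_jump_integrand_split eps b
  (pr : Riemann_integrable jump_integrand 0 b) (pr0 : Riemann_integrable jump_integrand 0 eps) :
  0 < eps < t -> t < b < 1 ->
  RiemannInt pr = RiemannInt pr0 - Phi A eps + Phi (A + B) b - Phi B t.
Proof.
  intros Heps Hb.
  assert (pr1 : Riemann_integrable jump_integrand eps b) by (apply (RiemannInt_P23 pr); lra).
  assert (pr2 : Riemann_integrable jump_integrand eps t) by (apply (RiemannInt_P22 pr1); lra).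
  assert (pr3 : Riemann_integrable jump_integrand t b) by (apply (RiemannInt_P23 pr1); lra).
  assert (prA : Riemann_integrable (phi A) eps t).
  { apply continuity_implies_RiemannInt; [lra|]. intros x Hx; apply continuity_pt_phi; lra. }
  assert (prB : Riemann_integrable (phi (A + B)) t b).
  { apply continuity_implies_RiemannInt; [lra|]. intros x Hx; apply continuity_pt_phi; lra. }
  assert (E2 : RiemannInt pr2 = Phi A t - Phi A eps).
  { rewrite (RiemannInt_P18 pr2 prA); [apply RiemannInt_phi; lra|lra|].
    intros x Hx; apply jump_integrand_lt; lra. }
  assert (E3 : RiemannInt pr3 = Phi (A + B) b - Phi (A + B) t).
  { rewrite (RiemannInt_P18 pr3 prB); [apply RiemannInt_phi; lra|lra|].
    intros x Hx; apply jump_integrand_ge; lra. }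
  rewrite <- (RiemannInt_P26 pr0 pr1 pr), <- (RiemannInt_P26 pr2 pr3 pr1), E2, E3.
  unfold Phi. ring.
Qed.

(* The part of the integral below [eps] is [O(eps)], which kills the lower boundary term. *)
Lemma RiemannInt_jump_integrand b (pr : Riemann_integrable jump_integrand 0 b) :
  t < b < 1 -> RiemannInt pr = Phi (A + B) b - Phi B t.
Proof.
  intros Hb.
  destruct (bounded_on_01 Q Q_cont) as [MQ HMQ].
  destruct (bounded_on_01 Qd Qd_cont) as [MQd HMQd].
  set (M := (1 + alpha + beta) * MQ + MQd + beta * MQ / (1 - t)).
  apply Rminus_diag_uniq, (eq0_of_Rabs_le_linear _ (A * M + A * MQ) t); [lra|].
  intros eps Heps.
  assert (pr0 : Riemann_integrable jump_integrand 0 eps) by (apply (RiemannInt_P22 pr); lra).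
  rewrite (RiemannInt_jump_integrand_split eps b pr pr0) by lra.
  assert (B0 : Rabs (RiemannInt pr0) <= A * M * eps).
  { apply Rabs_le.
    replace (A * M * eps) with (A * M * (eps - 0)) by ring.
    replace (- (A * M * (eps - 0))) with (- (A * M) * (eps - 0)) by ring.
    apply RiemannInt_const_bound; [lra|]. intros x Hx.
    apply Rabs_le_between. rewrite jump_integrand_lt by lra.
    apply Rabs_phi_le; [lra|lra|apply HMQ; lra|apply HMQd; lra]. }
  assert (B1 : Rabs (Phi A eps) <= A * MQ * eps).
  { eapply Rle_trans; [apply Rabs_Phi_le; [lra|lra|apply HMQ; lra]|].
    destruct (Rpower_le_1 (1 - eps) beta) as [P1 P2]; [lra|lra|].
    assert (0 <= MQ) by (pose proof (HMQ 0 ltac:(lra)); pose proof (Rabs_pos (Q 0)); lra).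
    assert (0 <= A * (eps * MQ)) by (apply Rmult_le_pos; nra).
    nra. }
  replace (RiemannInt pr0 - Phi A eps + Phi (A + B) b - Phi B t - (Phi (A + B) b - Phi B t))
    with (RiemannInt pr0 - Phi A eps) by ring.
  eapply Rle_trans; [apply Rabs_triang|]. rewrite Rabs_Ropp. lra.
Qed.

Lemma Phi_vanishes_at_1 K : 0 <= K -> forall eps, 0 < eps ->
  exists d, 0 < d /\ forall b, 1 - d < b < 1 -> Rabs (Phi K b) < eps.
Proof.
  intros HK eps Heps.
  destruct (bounded_on_01 Q Q_cont) as [MQ HMQ].
  assert (HMQ0 : 0 <= MQ) by (pose proof (HMQ 0 ltac:(lra)); pose proof (Rabs_pos (Q 0)); lra).
  set (L := K * MQ + 1).
  assert (HL : 0 < L) by (unfold L; nra).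
  destruct (Rpower_lt_near_0 beta (eps / L)) as [d [Hd Hsmall]]; [lra|apply Rdiv_lt_0_compat; lra|].
  exists (Rmin 1 d). split; [apply Rmin_pos; lra|]. intros b Hb.
  assert (Rmin 1 d <= 1) by apply Rmin_l; assert (Rmin 1 d <= d) by apply Rmin_r.
  assert (Hp := Hsmall (1 - b) ltac:(lra)).
  destruct (Rpower_le_1 (1 - b) beta) as [P1 P2]; [lra|lra|].
  eapply Rle_lt_trans; [apply Rabs_Phi_le; [lra|lra|apply HMQ; lra]|].
  assert (Rpower (1 - b) beta * L < eps).
  { apply (Rmult_lt_compat_r L) in Hp; [|exact HL].
    replace (eps / L * L) with eps in Hp by (field; lra). exact Hp. }
  unfold L in *. nra.
Qed.

Lemma improper_int01_jump_integrand v : improper_int01 jump_integrand v -> v = - Phi B t.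
Proof.
  intros Hv. apply (improper_int01_unique jump_integrand); [exact Hv|].
  destruct Hv as [pr _]. exists pr. intros eps Heps.
  destruct (Phi_vanishes_at_1 (A + B) AB_ge0 eps Heps) as [d [Hd Hsmall]].
  exists (Rmin d (1 - t)). split; [apply Rmin_pos; lra|]. intros b Hb Hbd.
  assert (Rmin d (1 - t) <= d) by apply Rmin_l; assert (Rmin d (1 - t) <= 1 - t) by apply Rmin_r.
  rewrite RiemannInt_jump_integrand by lra.
  replace (Phi (A + B) b - Phi B t - - Phi B t) with (Phi (A + B) b) by ring.
  apply Hsmall; lra.
Qed.

End JumpIntegral.

Definition PP (c : nat -> nat -> R) (m : nat) (x : R) : R := Pe c (S m) x * Pe c m x.

Definition dPP (c : nat -> nat -> R) (m : nat) (x : R) : R :=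
  dpoly (c (S m)) (S m) x * Pe c m x + Pe c (S m) x * dpoly (c m) m x.

Lemma derivable_pt_lim_PP c m x : derivable_pt_lim (PP c m) x (dPP c m x).
Proof.
  apply (derivable_pt_lim_mult (Pe c (S m)) (Pe c m));
    [exact (derivable_pt_lim_poly (c (S m)) (S m) x)|exact (derivable_pt_lim_poly (c m) m x)].
Qed.

Lemma continuity_pt_dPP c m x : continuity_pt (dPP c m) x.
Proof.
  unfold dPP.
  apply (continuity_pt_plus (fun x => dpoly (c (S m)) (S m) x * Pe c m x)
                            (fun x => Pe c (S m) x * dpoly (c m) m x)).
  - apply (continuity_pt_mult (dpoly (c (S m)) (S m)) (Pe c m));
      [apply continuity_pt_dpoly|exact (continuity_pt_poly (c m) m x)].
  - apply (continuity_pt_mult (Pe c (S m)) (dpoly (c m) m));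
      [exact (continuity_pt_poly (c (S m)) (S m) x)|apply continuity_pt_dpoly].
Qed.

(* [x P_(m+1)'] is [(m+1) P_(m+1)] plus a polynomial of degree [m] with leading
   coefficient [-p_1(m+1)], and [x P_m'] has degree [m]; so orthogonality leaves only
   [-p_1(m+1) h_m] besides the [Y] term. *)
Lemma improper_int01_jump_integrand_PP alpha beta A B t c h Y m :
  (forall m, c m m = 1) ->
  (forall i j, improper_int01 (fun x => Pe c i x * Pe c j x * weight alpha beta A B t x)
                 (if Nat.eqb i j then h i else 0)) ->
  improper_int01 (fun y => Pe c (S m) y * Pe c m y / (1 - y) * weight alpha beta A B t y)
    (Y (S m)) ->
  improper_int01 (jump_integrand alpha beta A B t (PP c m) (dPP c m))
    (- c (S m) m * h m - beta * Y (S m)).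
Proof.
  intros monic orth HY.
  set (W := weight alpha beta A B t).
  set (a2 := fun k => (INR k - INR (S m)) * c (S m) k).
  set (a3 := fun k => INR k * c m k).
  assert (I2 := orth_poly_le c h W monic orth m a2 m (le_n m)).
  rewrite Nat.eqb_refl in I2.
  assert (I3 := orth_poly_le c h W monic orth m a3 (S m) (le_S _ _ (le_n m))).
  replace (Nat.eqb m (S m)) with false in I3 by (symmetry; apply Nat.eqb_neq; lia).
  set (l := 1 + alpha + beta + INR (S m)).
  assert (Hsum := improper_int01_plus_scal _ _ _ _ (- beta)
                 (improper_int01_plus_scal _ _ _ _ 1
                    (improper_int01_plus_scal _ _ _ _ l I2 (orth_neq c h W orth (S m) m ltac:(lia)))
                    I3)
                 HY).
  replace (- c (S m) m * h m - beta * Y (S m))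
    with (a2 m * h m + l * 0 + 1 * 0 + - beta * Y (S m)) by (unfold a2; rewrite S_INR; ring).
  eapply improper_int01_ext; [|exact Hsum]. intros x _.
  assert (K1 := Rmult_x_dpoly_monic (c (S m)) m x (monic (S m))).
  assert (K2 := Rmult_x_dpoly (c m) m x).
  unfold jump_integrand, PP, dPP. fold W.
  replace (x * (dpoly (c (S m)) (S m) x * Pe c m x + Pe c (S m) x * dpoly (c m) m x))
    with (x * dpoly (c (S m)) (S m) x * Pe c m x + Pe c (S m) x * (x * dpoly (c m) m x))
    by ring.
  rewrite K1, K2. change (poly (c (S m)) (S m) x) with (Pe c (S m) x). fold a2 a3.
  unfold l, Rdiv. ring.
Qed.

Lemma yn_S_eq alpha beta A B t c h Y m :
  0 < alpha -> 0 < beta -> 0 <= A -> 0 <= A + B -> 0 < t < 1 ->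
  (forall m, c m m = 1) ->
  (forall i j, improper_int01 (fun x => Pe c i x * Pe c j x * weight alpha beta A B t x)
                 (if Nat.eqb i j then h i else 0)) ->
  (forall i, 0 < h i) ->
  improper_int01 (fun y => Pe c (S m) y * Pe c m y / (1 - y) * weight alpha beta A B t y)
    (Y (S m)) ->
  yn beta h Y (S m) = t * rn c h alpha beta B t (S m) - c (S m) m.
Proof.
  intros Ha Hb HA HAB Ht monic orth h_pos HY.
  assert (E := improper_int01_jump_integrand alpha beta A B t (PP c m) (dPP c m)
                 Ha Hb HA HAB Ht (derivable_pt_lim_PP c m) (continuity_pt_dPP c m) _
                 (improper_int01_jump_integrand_PP alpha beta A B t c h Y m monic orth HY)).
  specialize (h_pos m).
  unfold yn, rn, Phi, PP in *. rewrite !rpow_pos by lra.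
  apply (Rmult_eq_reg_r (h m)); [|lra].
  field_simplify; [|lra..]. lra.
Qed.

Theorem mainTheorem6
  (alpha beta A B t : R)
  (c : nat -> nat -> R)          (* coefficients of P_n(x; t) *)
  (h an bn : nat -> R)           (* h_n, alpha_n, beta_n *)
  (X Y : nat -> R)               (* the integrals defining x_n, y_n *)
  (n : nat) :
  0 < alpha -> 0 < beta ->
  0 <= A -> 0 <= A + B -> ~ (A = 0 /\ A + B = 0) ->
  0 < t < 1 ->
  (* P_m is monic of degree m *)
  (forall m : nat, c m m = 1) ->
  (* orthogonality: int_0^1 P_i P_j w = h_i delta_ij, h_i > 0 *)
  (forall i j : nat,
     improper_int01 (fun x => Pe c i x * Pe c j x * weight alpha beta A B t x)
       (if Nat.eqb i j then h i else 0)) ->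
  (forall i : nat, 0 < h i) ->
  (* three-term recurrence x P_m = P_{m+1} + alpha_m P_m + beta_m P_{m-1}, P_{-1} = 0 *)
  (forall (m : nat) (x : R),
     x * Pe c m x = Pe c (S m) x + an m * Pe c m x + bn m * Pprev c m x) ->
  (* beta_m = h_m / h_{m-1} *)
  (forall m : nat, (1 <= m)%nat -> bn m = h m / h (m - 1)%nat) ->
  (* X_m = int_0^1 P_m(y)^2/(1-y) w(y) dy *)
  (forall m : nat,
     improper_int01 (fun y => Pe c m y ^ 2 / (1 - y) * weight alpha beta A B t y) (X m)) ->
  (* Y_m = int_0^1 P_m(y) P_{m-1}(y)/(1-y) w(y) dy, m >= 1 *)
  (forall m : nat, (1 <= m)%nat ->
     improper_int01 (fun y => Pe c m y * Pe c (m - 1) y / (1 - y) * weight alpha beta A B t y) (Y m)) ->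
  (1 <= n)%nat ->
  let Rs := Rn c h alpha beta B t in
  let rs := rn c h alpha beta B t in
  let xs := xn beta h X in
  let ys := yn beta h Y in
  (t - an n) * (rs (S n) - rs n) = bn (S n) * Rs (S n) - bn n * Rs (n - 1)%nat /\
  (1 - an n) * (ys n - ys (S n)) = bn n * xs (n - 1)%nat - bn (S n) * xs (S n) /\
  - an n * (ys (S n) - ys n + rs n - rs (S n) - 1)
    = bn (S n) * xs (S n) - bn n * xs (n - 1)%nat + bn n * Rs (n - 1)%nat - bn (S n) * Rs (S n).
Proof.
  (* Non-degeneracy of the weight only serves to make [h_i > 0], which is assumed. *)
  intros Ha Hb HA HAB _ Ht monic orth h_pos rec bn_eq HX HY Hn.
  cbv zeta.
  destruct n as [|n]; [lia|]. replace (S n - 1)%nat with n by lia.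
  assert (bn_S : forall m, bn (S m) = h (S m) / h m).
  { intros m. rewrite bn_eq by lia. now replace (S m - 1)%nat with m by lia. }
  assert (HY_S : forall m, improper_int01
            (fun y => Pe c (S m) y * Pe c m y / (1 - y) * weight alpha beta A B t y) (Y (S m))).
  { intros m. generalize (HY (S m) ltac:(lia)). now replace (S m - 1)%nat with m by lia. }
  assert (E1 := rn_recurrence c h an bn h_pos rec bn_S alpha beta B t n).
  assert (E2 := xn_yn_recurrence c h an bn _ orth h_pos rec bn_S beta X Y n
                  HX (HY_S n) (HY_S (S n))).
  assert (E3 : yn beta h Y (S (S n)) - yn beta h Y (S n)
               - t * (rn c h alpha beta B t (S (S n)) - rn c h alpha beta B t (S n)) = an (S n)).
  { set (yn_S m := yn_S_eq alpha beta A B t c h Y m Ha Hb HA HAB Ht monic orth h_pos (HY_S m)).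
    rewrite (yn_S n), (yn_S (S n)).
    rewrite (an_S_eq_coef_diff c h an bn _ monic orth h_pos rec). ring. }
  split; [exact E1|]. split; [exact E2|]. lra.
Qed.
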